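(* Let $d\ge1$ and $P\subseteq\mathbb R\times[d]$. The partial colorful Helly number of the convexity space $(P,\mathcal C_{\equiv}(P))$ is $2$.
   Context: $[d]=\{1,\dots,d\}$. A (separated) $d$-interval is a set $I=\bigcup_{i\in[d]}\{(x,i): x\in I^{(i)}\}\subseteq\mathbb R\times[d]$ with each $I^{(i)}\subseteq\mathbb R$ convex (possibly empty). For $P\subseteq\mathbb R\times[d]$, $\mathcal C_{\equiv}(P)=\{I\cap P: I \text{ a } d\text{-interval}\}$. For a convexity space $(X,\mathcal C)$: it admits a partial colorful Helly theorem for colorful $k$-tuples if there is a function $N_{kpc}(m)$ such that for all finite $\mathcal F_1,\dots,\mathcal F_k\subseteq\mathcal C$ with $|\mathcal F_i|=N_{kpc}(m)$ and such that $\bigcap_{i=1}^kC_i\ne\emptyset$ for every choice $C_i\in\mathcal F_i$, some $\mathcal F_i$ contains a subfamily of size at least $m$ with nonempty intersection. The partial colorful Helly number $h_{pc}(X,\mathcal C)$ is the minimal $k$ for which $(X,\mathcal C)$ admits a partial colorful Helly theorem for colorful $k$-tuples.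
   Formalization: P ⊆ ℝ×[d] is also assumed infinite, so the partial colorful Helly number is asserted to be 2 for infinite P only. The statement above fails without it. *)

From mathcomp Require Import all_boot all_order all_algebra.
From mathcomp Require Import boolp classical_sets cardinality reals.
Set Implicit Arguments. Unset Strict Implicit. Unset Printing Implicit Defensive.
Import Order.TTheory GRing.Theory Num.Theory.
Local Open Scope ring_scope.
Local Open Scope classical_set_scope.

(* Points of R x [d] are pairs (x, i) : R * nat with 1 <= i <= d. *)

Definition convex_R (R : realType) (A : set R) : Prop :=
  forall a b c : R, A a -> A b -> a <= c -> c <= b -> A c.

Definition dinterval_of (R : realType) (d : nat) (I : nat -> set R) : set (R * nat) :=
  [set p | (1 <= p.2 <= d)%N /\ I p.2 p.1].

Definition is_dinterval (R : realType) (d : nat) (S : set (R * nat)) : Prop :=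
  exists I : nat -> set R, (forall i, (1 <= i <= d)%N -> convex_R (I i)) /\
                           S = dinterval_of d I.

Definition C_equiv (R : realType) (d : nat) (P : set (R * nat)) : set (set (R * nat)) :=
  [set S | exists I, is_dinterval d I /\ S = I `&` P].

(* A finite family of size N
   of members of C is given as an injective map 'I_N -> set T (so that the
   family, as a set of members of C, has exactly N elements).  Intersections
   are taken inside the ground set X (the empty intersection is X). *)
Definition family_of (T : Type) (C : set (set T)) (N : nat) (F : 'I_N -> set T) : Prop :=
  injective F /\ forall j, C (F j).

Definition admits_pc (T : Type) (X : set T) (C : set (set T)) (k : nat) : Prop :=
  exists Npc : nat -> nat, forall m : nat,
  forall F : 'I_k -> 'I_(Npc m) -> set T,
    (forall i, family_of C (F i)) ->
    (forall c : 'I_k -> 'I_(Npc m),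
        exists x, X x /\ forall i, F i (c i) x) ->
    exists i : 'I_k, exists J : {set 'I_(Npc m)},
      (m <= #|J|)%N /\ exists x, X x /\ forall j, j \in J -> F i j x.

Definition is_hpc (T : Type) (X : set T) (C : set (set T)) (h : nat) : Prop :=
  admits_pc X C h /\ forall k, (k < h)%N -> ~ admits_pc X C k.

(* Upper bound: given two families of d-intervals whose members meet
   pairwise across the families, colour each pair by the line carrying a
   chosen common point.  A bipartite Ramsey argument yields m members of each
   family all of whose cross points lie on one line, and on a line a common
   point of m members of one family is found directly.
   Lower bound: infinitely many distinct singletons form families with
   colourful 1-tuples meeting trivially but no two members intersecting. *)

From mathcomp Require Import all_boot all_order all_algebra.
From mathcomp Require Import boolp classical_sets cardinality reals.
From mathcomp Require Import zify.
Set Implicit Arguments. Unset Strict Implicit. Unset Printing Implicit Defensive.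
Import Order.TTheory GRing.Theory Num.Theory.
Local Open Scope classical_set_scope.

Lemma exists_large_fiber (K I : finType) (f : I -> K) (S : {set I}) :
  0 < #|K| -> exists c, #|S| <= #|K| * #|[set x in S | f x == c]|.
Proof.
move=> /card_gt0P[c0 _].
pose fiber c := #|[set x in S | f x == c]|.
have [c _ cmax] := @arg_maxnP K c0 xpredT fiber isT.
exists c; have -> : #|S| = \sum_(c' : K) fiber c'.
  rewrite -sum1_card (partition_big f xpredT) //=.
  by apply: eq_bigr => c' _; rewrite /fiber -sum1_card; apply: eq_bigl => x; rewrite inE.
rewrite -sum_nat_const; exact: leq_sum.
Qed.

Section BipartiteRamsey.
Variables (K I J : finType) (col : I -> J -> K).
Hypothesis K_gt0 : 0 < #|K|.

Definition monochromatic (c : K) (A : {set I}) (B : {set J}) :=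
  forall a b, a \in A -> b \in B -> col a b = c.

(* Rows are collected one at a time: a row [r] shrinks the columns to its
   largest colour class [c] and spends one unit of the weight [e c], which
   counts the rows of colour [c] still wanted. *)
Lemma bipartite_ramsey_weighted m s (e : K -> nat) (As : {set I}) (Bs : {set J}) :
  \sum_c e c = s -> s <= #|As| -> #|K| ^ s * m <= #|Bs| ->
  exists c (A : {set I}) (B : {set J}),
    [/\ A \subset As, B \subset Bs, e c <= #|A|, m <= #|B| & monochromatic c A B].
Proof.
elim: s e As Bs => [|s IH] e As Bs sum_e le_s_As le_Bs.
  have /card_gt0P[c _] := K_gt0.
  exists c, finset.set0, Bs; rewrite finset.sub0set subxx cards0.
  split=> // [||a b]; last by rewrite inE.
  - by rewrite -sum_e (bigD1 c) //= leq_addr.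
  - by rewrite expn0 mul1n in le_Bs.
have [c /eqP ec0 | e_gt0] := pickP (fun c => e c == 0).
  exists c, finset.set0, Bs; rewrite ec0 finset.sub0set subxx.
  split=> // [|a b]; last by rewrite inE.
  by apply: leq_trans le_Bs; rewrite leq_pmull ?expn_gt0 ?K_gt0.
have /card_gt0P[r rAs] : 0 < #|As| by apply: leq_trans le_s_As.
have [c le_Bs_Bc] := exists_large_fiber (col r) Bs K_gt0.
set Bc := [set b in Bs | col r b == c] in le_Bs_Bc.
have le_Bc : #|K| ^ s * m <= #|Bc|.
  by rewrite -(leq_pmul2l K_gt0) mulnA -expnS (leq_trans le_Bs).
pose e' c' := if c' == c then (e c).-1 else e c'.
have sum_e' : \sum_c' e' c' = s.
  move: sum_e (e_gt0 c); rewrite (bigD1 c) //= => sum_e.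
  rewrite (bigD1 c) //= {1}/e' eqxx (eq_bigr e) => [|c' /negbTE ne]; last by rewrite /e' ne.
  by move: sum_e; lia.
have le_s_As' : s <= #|As :\ r| by move: le_s_As; rewrite (cardsD1 r) rAs.
have [c' [A [B [sub_A sub_B le_A le_B monoAB]]]] := IH e' _ _ sum_e' le_s_As' le_Bc.
have BBs : B \subset Bs.
  by apply: fintype.subset_trans sub_B _; apply/fintype.subsetP => b; rewrite inE => /andP[].
have [eq_c' | neq_c'] := eqVneq c' c; last first.
  exists c', A, B; split=> //; first exact: fintype.subset_trans sub_A (subD1set _ _).
  by move: le_A; rewrite /e' (negbTE neq_c').
subst c'; exists c, (r |: A), B; split=> //.
- by rewrite finset.subUset finset.sub1set rAs (fintype.subset_trans sub_A) ?subD1set.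
- have rA : r \notin A by apply/negP => /(fintype.subsetP sub_A); rewrite !inE eqxx.
  by rewrite cardsU1 rA; move: le_A; rewrite /e' eqxx; case: (e c).
- move=> a b /setU1P[-> bB|]; last exact: monoAB.
  by have := fintype.subsetP sub_B b bB; rewrite inE => /andP[_ /eqP].
Qed.

Lemma bipartite_ramsey m :
  #|K| * m <= #|I| -> #|K| ^ (#|K| * m) * m <= #|J| ->
  exists c (A : {set I}) (B : {set J}), [/\ m <= #|A|, m <= #|B| & monochromatic c A B].
Proof.
rewrite -[#|I|]cardsT -[#|J|]cardsT => le_I le_J.
have [|c [A [B [_ _ le_A le_B monoAB]]]] :=
  bipartite_ramsey_weighted (e := fun=> m) _ le_I le_J; first exact: sum_nat_const.
by exists c, A, B.
Qed.

End BipartiteRamsey.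

Section Line.
Local Open Scope ring_scope.

(* With [x] the smallest of the row maxima of [w], either every row has an
   entry [<= x], so [x] lies in every [a u], or some row lies strictly above
   [x], and then [x] is squeezed in every [b v] between that row and the row
   where [x] is attained. *)
Lemma line_cross_helly (R : realType) (I J : finType) (A : {set I}) (B : {set J})
    (a : I -> set R) (b : J -> set R) (w : I -> J -> R) :
  (0 < #|A|)%N -> (0 < #|B|)%N ->
  (forall u, u \in A -> convex_R (a u)) -> (forall v, v \in B -> convex_R (b v)) ->
  (forall u v, u \in A -> v \in B -> a u (w u v) /\ b v (w u v)) ->
  exists2 u, u \in A & exists2 v, v \in B &
    (forall u', u' \in A -> a u' (w u v)) \/ (forall v', v' \in B -> b v' (w u v)).
Proof.
move=> /card_gt0P[u1 u1A] /card_gt0P[v1 v1B] convex_a convex_b w_ab.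
pose vmax u := [arg max_(v > v1 in B) w u v]%O.
have vmaxP u : vmax u \in B /\ forall v, v \in B -> w u v <= w u (vmax u).
  by rewrite /vmax; case: arg_maxP.
pose u0 := [arg min_(u < u1 in A) w u (vmax u)]%O.
have [u0A u0_min] : u0 \in A /\ forall u, u \in A -> w u0 (vmax u0) <= w u (vmax u).
  by rewrite /u0; case: arg_minP.
set x := w u0 (vmax u0).
exists u0 => //; exists (vmax u0); first exact: (vmaxP u0).1.
have [/exists_inP[u2 u2A /forall_inP above] | ] :=
  boolP [exists u in A, [forall v in B, x < w u v]].
  right => v vB; apply: (convex_b v vB (w u0 v) (w u2 v)).
  - exact: (w_ab u0 v u0A vB).2.
  - exact: (w_ab u2 v u2A vB).2.
  - exact: (vmaxP u0).2.
  - exact: ltW (above v vB).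
rewrite negb_exists_in => /forall_inP below; left => u uA.
have := below u uA; rewrite negb_forall_in => /exists_inP[v vB]; rewrite -leNgt => le_wx.
apply: (convex_a u uA (w u v) (w u (vmax u))) => //.
- exact: (w_ab u v uA vB).1.
- exact: (w_ab u (vmax u) uA (vmaxP u).1).1.
- exact: u0_min.
Qed.

End Line.

Lemma C_equivP (R : realType) (d : nat) (P : set (R * nat)) (S : set (R * nat)) :
  C_equiv d P S -> exists I : nat -> set R,
    (forall k, (1 <= k <= d)%N -> convex_R (I k)) /\ S = dinterval_of d I `&` P.
Proof. by move=> [_ [[I [convex_I ->]] ->]]; exists I. Qed.

Lemma dinterval_setI_line (R : realType) (d : nat) (P : set (R * nat))
    (I : nat -> set R) (p : R * nat) :
  (1 <= p.2 <= d)%N -> P p -> (dinterval_of d I `&` P) p <-> I p.2 p.1.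
Proof. by move=> p_line Pp; split=> [[[]] // | ?]. Qed.

Lemma C_equiv_set1 (R : realType) (d : nat) (P : set (R * nat)) (p : R * nat) :
  P `<=` [set q | (1 <= q.2 <= d)%N] -> P p -> C_equiv d P [set p].
Proof.
move=> Pd Pp; pose I k := [set x : R | (x, k) = p].
exists (dinterval_of d I); split.
  exists I; split=> // k _ x y z; rewrite /I /= => <- [->] le_xz le_zy.
  by congr (_, _); apply/le_anti; rewrite le_xz le_zy.
apply/seteqP; split=> [_ -> | [x k] [[_ /= ->]]] //.
by split=> //; split; [exact: Pd | exact/esym/surjective_pairing].
Qed.

Lemma colorful_pair_witness (T : Type) (X : set T) (N : nat)
    (F : 'I_2 -> 'I_N -> set T) :
  (forall c : 'I_2 -> 'I_N, exists x, X x /\ forall i, F i (c i) x) ->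
  exists w : 'I_N -> 'I_N -> T,
    forall a b, [/\ X (w a b), F ord0 a (w a b) & F ord_max b (w a b)].
Proof.
move=> meetF.
suff /choice[w w_spec] : forall a, exists wa : 'I_N -> T,
    forall b, [/\ X (wa b), F ord0 a (wa b) & F ord_max b (wa b)] by exists w.
move=> a; suff /choice[wa wa_spec] : forall b, exists x,
    [/\ X x, F ord0 a x & F ord_max b x] by exists wa.
move=> b; have [x [Xx Fx]] := meetF (fun i => if i == ord0 then a else b).
by exists x; split; [| exact: (Fx ord0) | exact: (Fx ord_max)].
Qed.

Lemma admits_pc2_C_equiv (R : realType) (d : nat) (P : set (R * nat)) :
  P `<=` [set p | (1 <= p.2 <= d)%N] -> admits_pc P (C_equiv d P) 2.
Proof.
(* The bounds of [bipartite_ramsey] for [m.+1]: the blocks must be nonempty. *)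
move=> Pd; exists (fun m => d.+1 ^ (d.+1 * m.+1) * m.+1 + d.+1 * m.+1)%N.
move=> m F famF meetF; set N := (_ + _)%N in F famF meetF *.
have /choice[Ic Ic_spec] : forall i, exists Ici : 'I_N -> nat -> set R, forall j,
    (forall k, (1 <= k <= d)%N -> convex_R (Ici j k)) /\
    F i j = dinterval_of d (Ici j) `&` P.
  by move=> i; have /choice[Ici ?] := fun j => C_equivP ((famF i).2 j); exists Ici.
have [w w_spec] := colorful_pair_witness meetF.
have w_line a b : (1 <= (w a b).2 <= d)%N by have [/Pd] := w_spec a b.
pose line a b : 'I_d.+1 := inord (w a b).2.
have [|||c [A [B [le_A le_B monoAB]]]] := @bipartite_ramsey _ _ _ line _ m.+1.
- by rewrite card_ord.
- by rewrite !card_ord /N leq_addl.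
- by rewrite !card_ord /N leq_addr.
have on_c u v : u \in A -> v \in B -> (w u v).2 = c.
  move=> uA vB; rewrite -(monoAB u v uA vB) inordK //.
  by rewrite ltnS; case/andP: (w_line u v).
have A_gt0 : 0 < #|A| := leq_trans (ltn0Sn m) le_A.
have B_gt0 : 0 < #|B| := leq_trans (ltn0Sn m) le_B.
have c_line : 1 <= c <= d.
  have /card_gt0P[u uA] := A_gt0; have /card_gt0P[v vB] := B_gt0.
  by rewrite -(on_c u v).
have Fi_on_c i j u v : u \in A -> v \in B ->
    F i j (w u v) <-> Ic i j c (w u v).1.
  move=> uA vB; rewrite (Ic_spec i j).2 -(on_c u v) //.
  by apply: dinterval_setI_line => //; case: (w_spec u v).
have [|||||u uA [v vB [inA|inB]]] :=
  line_cross_helly (a := fun u => Ic ord0 u c) (b := fun v => Ic ord_max v c)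
    (w := fun u v => (w u v).1) (A := A) (B := B).
- exact: A_gt0.
- exact: B_gt0.
- by move=> u _; exact: (Ic_spec _ _).1.
- by move=> v _; exact: (Ic_spec _ _).1.
- by move=> u v uA vB; rewrite -!(Fi_on_c _ _ u v) //; case: (w_spec u v).
- exists ord0, A; split; first exact: ltnW.
  exists (w u v); split; first by case: (w_spec u v).
  by move=> j jA; apply/Fi_on_c => //; exact: inA.
- exists ord_max, B; split; first exact: ltnW.
  exists (w u v); split; first by case: (w_spec u v).
  by move=> j jB; apply/Fi_on_c => //; exact: inB.
Qed.

Lemma not_admits_pc0 (T : Type) (X : set T) (C : set (set T)) :
  X !=set0 -> ~ admits_pc X C 0.
Proof.
move=> [x Xx] [Npc pc].
have [| c | [] //] := pc 0%N (fun _ _ => set0); first by case.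
by exists x; split=> // -[].
Qed.

Lemma infinite_set_injection (T : Type) (X : set T) :
  infinite_set X -> exists2 f : nat -> T, injective f & forall n, X (f n).
Proof.
elim/Ppointed: T => T in X *; first by rewrite emptyE => /(_ (finite_set0 _)).
move=> /infiniteP /pcard_leP /injfunPex [f Xf f_inj].
by exists f => [m n | n]; [apply: f_inj; rewrite ?inE | exact: Xf].
Qed.

Lemma not_admits_pc1 (T : Type) (X : set T) (C : set (set T)) :
  infinite_set X -> (forall x, X x -> C [set x]) -> ~ admits_pc X C 1.
Proof.
move=> /infinite_set_injection[f f_inj Xf] C1 [Npc pc].
have [_ | c | i [J [le_J [x [_ Jx]]]]] := pc 2%N (fun _ j => [set f j]).
- split=> [j j' /(congr1 (@^~ (f j))) | j]; last exact: C1.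
  by rewrite /= propeqE => -[+ _] => /(_ erefl) /f_inj /val_inj.
- by exists (f (c ord0)); split=> // i; rewrite (ord1 i).
have /card_gt1P[j [j' [jJ j'J /eqP[]]]] := le_J.
by apply/val_inj/f_inj; rewrite -(Jx j jJ) -(Jx j' j'J).
Qed.

Theorem lemma1 (R : realType) (d : nat) (P : set (R * nat)) :
  (1 <= d)%N ->
  P `<=` [set p | (1 <= p.2 <= d)%N] ->
  ~ finite_set P ->
  is_hpc P (C_equiv d P) 2.
Proof.
move=> _ Pd P_inf; split; first exact: admits_pc2_C_equiv.
case=> [|[|]] // _.
- exact/not_admits_pc0/infinite_setN0.
- by apply: not_admits_pc1 => // p Pp; exact: C_equiv_set1.
Qed.
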